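(* For every integer $n>1$, there exist thresholds $0<\tau_-(n)<\tau_+(n)<\infty$ such that for every $\tau<\tau_-(n)$ (respectively $\tau>\tau_+(n)$), the function $f_{n,\tau}\colon[1,n-1]\to\mathbb{R}$ defined by $f_{n,\tau}(x)=(x+1)\log\big(n-x-1+e^{1/\tau}+xe^{-1/(\tau x)}\big)$ is strictly concave (respectively strictly convex). *)

From Stdlib Require Import Reals.
Open Scope R_scope.

Definition f_ntau (n : nat) (tau x : R) : R :=
  (x + 1) * ln (INR n - x - 1 + exp (1 / tau) + x * exp (- (1 / (tau * x)))).

Definition strictly_concave_on (a b : R) (f : R -> R) : Prop :=
  forall x y t, a <= x <= b -> a <= y <= b -> x <> y -> 0 < t < 1 ->
    t * f x + (1 - t) * f y < f (t * x + (1 - t) * y).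

Definition strictly_convex_on (a b : R) (f : R -> R) : Prop :=
  forall x y t, a <= x <= b -> a <= y <= b -> x <> y -> 0 < t < 1 ->
    f (t * x + (1 - t) * y) < t * f x + (1 - t) * f y.

(* With s = 1/(tau x), the argument g of the logarithm has g' = e^{-s}(1 + s) - 1
   and g'' = e^{-s} s^2 / x, and f'' has the sign of
   g (2 g' + (x + 1) g'') - (x + 1) g'^2.
   For tau < 1/(18 n) we have s > 18 on [1, n - 1], so e^s > 1 + s + s^2 and
   2 g' + (x + 1) g'' <= 2 (e^{-s}(1 + s + s^2) - 1) < 0: f is strictly concave.
   For tau > 4 we have s x < 1/4; the bounds 1 - s^2/2 <= e^{-s}(1 + s) <= 1 give
   x (2 g' + (x + 1) g'') >= s^2/2 while x (x + 1) g'^2 <= s^2/32, and g >= 1: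
   f is strictly convex. *)

From Stdlib Require Import Reals Lra Lia.
From Coquelicot Require Import Coquelicot.
Open Scope R_scope.

Section ConvexityFromSecondDerivative.

Variables a b : R.

Lemma strictly_increasing_of_deriv_pos (f f' : R -> R) :
  (forall x, a <= x <= b -> derivable_pt_lim f x (f' x)) ->
  (forall x, a <= x <= b -> 0 < f' x) ->
  forall u v, a <= u -> u < v -> v <= b -> f u < f v.
Proof.
intros f_deriv f'_pos u v hu huv hv.
destruct (MVT_cor2 f f' u v huv) as [c [hmvt hc]].
- intros c hc; apply f_deriv; lra.
- assert (0 < f' c) by (apply f'_pos; lra).
  assert (0 < f' c * (v - u)) by (apply Rmult_lt_0_compat; lra).
  lra.
Qed.

Lemma strictly_convex_on_of_deriv2_pos (f f' f'' : R -> R) :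
  (forall x, a <= x <= b -> derivable_pt_lim f x (f' x)) ->
  (forall x, a <= x <= b -> derivable_pt_lim f' x (f'' x)) ->
  (forall x, a <= x <= b -> 0 < f'' x) -> strictly_convex_on a b f.
Proof.
intros f_deriv f'_deriv f''_pos.
assert (ordered : forall x y t, a <= x -> x < y -> y <= b -> 0 < t < 1 ->
          f (t * x + (1 - t) * y) < t * f x + (1 - t) * f y).
{ intros x y t hx hxy hy ht.
  set (z := t * x + (1 - t) * y).
  assert (hxz : x < z) by (unfold z; nra).
  assert (hzy : z < y) by (unfold z; nra).
  destruct (MVT_cor2 f f' x z hxz) as [c1 [hleft hc1]].
  { intros c hc; apply f_deriv; lra. }
  destruct (MVT_cor2 f f' z y hzy) as [c2 [hright hc2]].
  { intros c hc; apply f_deriv; lra. }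
  assert (hslope : f' c1 < f' c2).
  { apply (strictly_increasing_of_deriv_pos f' f''); auto; lra. }
  replace (z - x) with ((1 - t) * (y - x)) in hleft by (unfold z; ring).
  replace (y - z) with (t * (y - x)) in hright by (unfold z; ring).
  assert (0 < t * (1 - t) * (y - x) * (f' c2 - f' c1)).
  { repeat apply Rmult_lt_0_compat; lra. }
  nra. }
intros x y t hx hy hxy ht.
destruct (Rlt_or_le x y) as [hlt | hge].
- apply ordered; lra.
- replace (t * x + (1 - t) * y) with ((1 - t) * y + (1 - (1 - t)) * x) by ring.
  replace (t * f x + (1 - t) * f y) with ((1 - t) * f y + (1 - (1 - t)) * f x)
    by ring.
  apply ordered; lra.
Qed.

Lemma strictly_concave_on_of_deriv2_neg (f f' f'' : R -> R) :
  (forall x, a <= x <= b -> derivable_pt_lim f x (f' x)) ->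
  (forall x, a <= x <= b -> derivable_pt_lim f' x (f'' x)) ->
  (forall x, a <= x <= b -> f'' x < 0) -> strictly_concave_on a b f.
Proof.
intros f_deriv f'_deriv f''_neg.
assert (hconvex : strictly_convex_on a b (fun x => - f x)).
{ apply (strictly_convex_on_of_deriv2_pos _ (fun x => - f' x) (fun x => - f'' x)).
  - intros x hx; apply derivable_pt_lim_opp; auto.
  - intros x hx; apply derivable_pt_lim_opp; auto.
  - intros x hx; specialize (f''_neg x hx); lra. }
intros x y t hx hy hxy ht; specialize (hconvex x y t hx hy hxy ht); simpl in hconvex.
lra.
Qed.

End ConvexityFromSecondDerivative.

Lemma derivable_pt_lim_succ_mul_ln (g : R -> R) (dg x : R) :
  derivable_pt_lim g x dg -> 0 < g x ->
  derivable_pt_lim (fun y => (y + 1) * ln (g y)) x (ln (g x) + (x + 1) * dg / g x).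
Proof.
intros hg hpos; apply is_derive_Reals in hg; apply is_derive_Reals.
auto_derive; [split; [eexists; exact hg | auto] |].
rewrite (is_derive_unique _ _ _ hg : Derive (fun y => g y) x = dg).
field; lra.
Qed.

Lemma derivable_pt_lim_succ_mul_ln_deriv (g g' : R -> R) (dg' x : R) :
  derivable_pt_lim g x (g' x) -> derivable_pt_lim g' x dg' -> 0 < g x ->
  derivable_pt_lim (fun y => ln (g y) + (y + 1) * g' y / g y) x
    ((g x * (2 * g' x + (x + 1) * dg') - (x + 1) * g' x ^ 2) / g x ^ 2).
Proof.
intros hg hg' hpos; apply is_derive_Reals in hg, hg'; apply is_derive_Reals.
auto_derive.
- repeat split; try (eexists; eassumption); lra.
- rewrite (is_derive_unique _ _ _ hg : Derive (fun y => g y) x = g' x),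
    (is_derive_unique _ _ _ hg' : Derive (fun y => g' y) x = dg').
  field; lra.
Qed.

Section SuccMulLn.

Variables (a b : R) (g g' g'' : R -> R).
Hypothesis g_deriv : forall x, a <= x <= b -> derivable_pt_lim g x (g' x).
Hypothesis g'_deriv : forall x, a <= x <= b -> derivable_pt_lim g' x (g'' x).
Hypothesis g_pos : forall x, a <= x <= b -> 0 < g x.

Lemma strictly_convex_on_succ_mul_ln :
  (forall x, a <= x <= b ->
     0 < g x * (2 * g' x + (x + 1) * g'' x) - (x + 1) * g' x ^ 2) ->
  strictly_convex_on a b (fun x => (x + 1) * ln (g x)).
Proof.
intros num_pos.
apply (strictly_convex_on_of_deriv2_pos a b _
         (fun x => ln (g x) + (x + 1) * g' x / g x)
         (fun x => (g x * (2 * g' x + (x + 1) * g'' x) - (x + 1) * g' x ^ 2) / g x ^ 2)).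
- intros x hx; apply derivable_pt_lim_succ_mul_ln; auto.
- intros x hx; apply derivable_pt_lim_succ_mul_ln_deriv; auto.
- intros x hx; apply Rdiv_lt_0_compat; [auto | apply pow_lt; auto].
Qed.

Lemma strictly_concave_on_succ_mul_ln :
  (forall x, a <= x <= b ->
     g x * (2 * g' x + (x + 1) * g'' x) - (x + 1) * g' x ^ 2 < 0) ->
  strictly_concave_on a b (fun x => (x + 1) * ln (g x)).
Proof.
intros num_neg.
apply (strictly_concave_on_of_deriv2_neg a b _
         (fun x => ln (g x) + (x + 1) * g' x / g x)
         (fun x => (g x * (2 * g' x + (x + 1) * g'' x) - (x + 1) * g' x ^ 2) / g x ^ 2)).
- intros x hx; apply derivable_pt_lim_succ_mul_ln; auto.
- intros x hx; apply derivable_pt_lim_succ_mul_ln_deriv; auto.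
- intros x hx; unfold Rdiv; rewrite <- (Rmult_0_l (/ g x ^ 2)).
  apply Rmult_lt_compat_r; [apply Rinv_0_lt_compat, pow_lt |]; auto.
Qed.

End SuccMulLn.

Definition psi (s : R) : R := exp (- s) * (1 + s).

Lemma exp_neg_mul_exp s : exp (- s) * exp s = 1.
Proof. rewrite exp_Ropp; field; apply Rgt_not_eq, exp_pos. Qed.

Lemma psi_le_1 s : psi s <= 1.
Proof.
unfold psi; pose proof (exp_ineq1_le s); pose proof (exp_pos (- s)).
pose proof (exp_neg_mul_exp s); nra.
Qed.

Lemma psi_ge s : 0 <= s -> 1 - s ^ 2 / 2 <= psi s.
Proof.
intros hs; destruct (Req_dec s 0) as [-> | hs0].
{ unfold psi; rewrite Ropp_0, exp_0; lra. }
destruct (MVT_cor2 (fun u => psi u + u ^ 2 / 2) (fun u => u * (1 - exp (- u))) 0 s)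
  as [c [hmvt hc]]; [lra | |].
- intros c _; apply is_derive_Reals; unfold psi; auto_derive; [exact I | field].
- unfold psi in hmvt |- *; rewrite Ropp_0, exp_0 in hmvt.
  assert (exp (- c) < 1) by (rewrite <- exp_0; apply exp_increasing; lra).
  assert (0 < c * (1 - exp (- c)) * (s - 0)) by (repeat apply Rmult_lt_0_compat; lra).
  lra.
Qed.

Lemma exp_gt_quadratic s : 18 < s -> 1 + s + s ^ 2 < exp s.
Proof.
intros hs.
(* (1 + s/3)^3 exceeds 1 + s + s^2 exactly when s > 18. *)
assert (hcube : (1 + s / 3) ^ 3 <= exp (s / 3) ^ 3).
{ apply pow_incr; pose proof (exp_ineq1_le (s / 3)); lra. }
replace (exp (s / 3) ^ 3) with (exp s) in hcube
  by (simpl; rewrite Rmult_1_r, <- !exp_plus; f_equal; field).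
replace ((1 + s / 3) ^ 3) with (1 + s + s ^ 2 + s ^ 2 * (s - 18) / 27) in hcube by field.
assert (0 < s ^ 2 * (s - 18)) by (apply Rmult_lt_0_compat; nra).
lra.
Qed.

Lemma concavity_term_neg x s : 1 <= x -> 18 < s ->
  2 * (psi s - 1) + (x + 1) * (exp (- s) * s ^ 2 / x) < 0.
Proof.
intros hx hs; unfold psi.
assert (hE : 0 < exp (- s)) by apply exp_pos.
assert ((x + 1) * (exp (- s) * s ^ 2 / x) <= 2 * (exp (- s) * s ^ 2)).
{ replace ((x + 1) * (exp (- s) * s ^ 2 / x)) with ((1 + / x) * (exp (- s) * s ^ 2))
    by (field; lra).
  apply Rmult_le_compat_r; [nra |].
  assert (/ x <= 1) by (rewrite <- Rinv_1; apply Rinv_le_contravar; lra); lra. }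
pose proof (exp_gt_quadratic s hs); pose proof (exp_neg_mul_exp s).
assert (exp (- s) * (1 + s + s ^ 2) < exp (- s) * exp s) by (apply Rmult_lt_compat_l; lra).
nra.
Qed.

Lemma convexity_term_dominates x s : 1 <= x -> 0 < s -> s * x <= 1 / 4 ->
  (x + 1) * (psi s - 1) ^ 2 < 2 * (psi s - 1) + (x + 1) * (exp (- s) * s ^ 2 / x).
Proof.
intros hx hs hsx.
pose proof (psi_le_1 s); pose proof (psi_ge s (Rlt_le _ _ hs)).
assert (hE : 1 - s <= exp (- s)) by (pose proof (exp_ineq1_le (- s)); lra).
assert (hsq : (psi s - 1) ^ 2 <= s ^ 4 / 4) by nra.
apply (Rmult_lt_reg_l x); [lra |].
replace (x * (2 * (psi s - 1) + (x + 1) * (exp (- s) * s ^ 2 / x)))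
  with (2 * x * (psi s - 1) + (x + 1) * exp (- s) * s ^ 2) by (field; lra).
assert (s ^ 2 / 2 <= 2 * x * (psi s - 1) + (x + 1) * exp (- s) * s ^ 2).
{ assert (- (x * s ^ 2) <= 2 * x * (psi s - 1)) by nra.
  assert ((x + 1) * (1 - s) * s ^ 2 <= (x + 1) * exp (- s) * s ^ 2).
  { apply Rmult_le_compat_r; [nra |]; apply Rmult_le_compat_l; lra. }
  assert (s * (x + 1) <= 1 / 2) by nra.
  nra. }
assert (x * ((x + 1) * (psi s - 1) ^ 2) <= 2 * x ^ 2 * (s ^ 4 / 4)).
{ rewrite <- Rmult_assoc; apply Rmult_le_compat;
  [apply Rmult_le_pos; lra | apply pow2_ge_0 | nra | exact hsq]. }
assert (0 <= s * x) by nra.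
assert (2 * x ^ 2 * (s ^ 4 / 4) <= s ^ 2 / 32).
{ replace (2 * x ^ 2 * (s ^ 4 / 4)) with ((s * x) ^ 2 * s ^ 2 / 2) by field.
  assert ((s * x) ^ 2 <= 1 / 16) by nra.
  assert (0 < s ^ 2) by nra.
  nra. }
assert (0 < s ^ 2) by nra.
lra.
Qed.

Definition g_ntau (n : nat) (tau x : R) : R :=
  INR n - x - 1 + exp (1 / tau) + x * exp (- (1 / (tau * x))).

Lemma derivable_pt_lim_g_ntau n tau x : tau <> 0 -> x <> 0 ->
  derivable_pt_lim (g_ntau n tau) x (psi (1 / (tau * x)) - 1).
Proof.
intros htau hx; apply is_derive_Reals; unfold g_ntau, psi.
auto_derive; [now apply Rmult_integral_contrapositive |].
unfold Rdiv; field; auto.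
Qed.

Lemma derivable_pt_lim_psi_inv tau x : tau <> 0 -> x <> 0 ->
  derivable_pt_lim (fun y => psi (1 / (tau * y)) - 1) x
    (exp (- (1 / (tau * x))) * (1 / (tau * x)) ^ 2 / x).
Proof.
intros htau hx; apply is_derive_Reals; unfold psi.
assert (tau * x <> 0) by now apply Rmult_integral_contrapositive.
auto_derive; [tauto |].
unfold Rdiv; field; auto.
Qed.

Lemma g_ntau_ge_exp n tau x : 0 < x -> x <= INR n - 1 -> exp (1 / tau) <= g_ntau n tau x.
Proof.
intros hx hxn; unfold g_ntau.
assert (0 < x * exp (- (1 / (tau * x)))) by (apply Rmult_lt_0_compat; [lra | apply exp_pos]).
lra.
Qed.

Lemma f_ntau_strictly_concave n tau : (0 < n)%nat -> 0 < tau -> tau < 1 / (18 * INR n) ->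
  strictly_concave_on 1 (INR n - 1) (f_ntau n tau).
Proof.
intros hn htau htau_small.
apply lt_0_INR in hn.
assert (g_pos : forall x, 1 <= x <= INR n - 1 -> 0 < g_ntau n tau x).
{ intros x hx; pose proof (g_ntau_ge_exp n tau x); pose proof (exp_pos (1 / tau)); lra. }
apply (strictly_concave_on_succ_mul_ln _ _ (g_ntau n tau)
         (fun x => psi (1 / (tau * x)) - 1)
         (fun x => exp (- (1 / (tau * x))) * (1 / (tau * x)) ^ 2 / x)); auto.
- intros x hx; apply derivable_pt_lim_g_ntau; lra.
- intros x hx; apply derivable_pt_lim_psi_inv; lra.
- intros x hx.
  assert (hs : 18 < 1 / (tau * x)).
  { assert (tau * (18 * INR n) < 1).
    { apply (Rmult_lt_compat_r (18 * INR n)) in htau_small; [| lra].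
      unfold Rdiv in htau_small; rewrite Rmult_1_l, Rinv_l in htau_small; lra. }
    apply (Rmult_lt_reg_r (tau * x)); [nra |].
    unfold Rdiv; rewrite Rmult_1_l, Rinv_l; nra. }
  pose proof (concavity_term_neg x _ (proj1 hx) hs); pose proof (g_pos x hx).
  assert (0 <= (x + 1) * (psi (1 / (tau * x)) - 1) ^ 2)
    by (apply Rmult_le_pos; [lra | apply pow2_ge_0]).
  nra.
Qed.

Lemma f_ntau_strictly_convex n tau : 4 < tau ->
  strictly_convex_on 1 (INR n - 1) (f_ntau n tau).
Proof.
intros htau.
assert (g_ge_1 : forall x, 1 <= x <= INR n - 1 -> 1 <= g_ntau n tau x).
{ intros x hx; pose proof (g_ntau_ge_exp n tau x); pose proof (exp_ineq1_le (1 / tau)).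
  assert (0 < 1 / tau) by (apply Rdiv_lt_0_compat; lra); lra. }
apply (strictly_convex_on_succ_mul_ln _ _ (g_ntau n tau)
         (fun x => psi (1 / (tau * x)) - 1)
         (fun x => exp (- (1 / (tau * x))) * (1 / (tau * x)) ^ 2 / x)).
- intros x hx; apply derivable_pt_lim_g_ntau; lra.
- intros x hx; apply derivable_pt_lim_psi_inv; lra.
- intros x hx; specialize (g_ge_1 x hx); lra.
- intros x hx.
  assert (hs : 0 < 1 / (tau * x)) by (apply Rdiv_lt_0_compat; nra).
  assert (hsx : 1 / (tau * x) * x <= 1 / 4).
  { replace (1 / (tau * x) * x) with (1 / tau) by (field; lra).
    apply Rmult_le_compat_l; [lra |]; apply Rinv_le_contravar; lra. }
  pose proof (convexity_term_dominates x _ (proj1 hx) hs hsx); specialize (g_ge_1 x hx).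
  assert (0 <= (x + 1) * (psi (1 / (tau * x)) - 1) ^ 2)
    by (apply Rmult_le_pos; [lra | apply pow2_ge_0]).
  nra.
Qed.

Theorem lemma15 (n : nat) (hn : (1 < n)%nat) :
  exists tau_minus tau_plus : R,
    0 < tau_minus /\ tau_minus < tau_plus /\
    (forall tau, 0 < tau -> tau < tau_minus ->
       strictly_concave_on 1 (INR n - 1) (f_ntau n tau)) /\
    (forall tau, tau_plus < tau ->
       strictly_convex_on 1 (INR n - 1) (f_ntau n tau)).
Proof.
assert (hn2 : 2 <= INR n) by (apply (le_INR 2); lia).
exists (1 / (18 * INR n)), 4; repeat split.
- apply Rdiv_lt_0_compat; lra.
- apply (Rmult_lt_reg_r (18 * INR n)); [lra |].
  unfold Rdiv; rewrite Rmult_1_l, Rinv_l; lra.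
- intros tau htau htau_small; apply f_ntau_strictly_concave; auto; lia.
- intros tau htau; apply f_ntau_strictly_convex; auto.
Qed.
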